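(* Let $k\ge 1$ and let $\Gamma\subset\mathbb{R}_+^k$ be a nonempty compact set of possible allocations. Let $X$ be a random valuation with values in $\mathbb{R}_+^k$ and finite expectation, i.e., $\mathbb{E}[\|X\|]<\infty$. Then there exists an incentive compatible and individually rational $\Gamma$-mechanism $\mu=(q,s)$ such that $R(\mu;X)=\textsc{Rev}_\Gamma(X)$.
   Context: A $\Gamma$-mechanism $\mu=(q,s)$ consists of an allocation function $q:\mathbb{R}_+^k\to\Gamma$ and a payment function $s:\mathbb{R}_+^k\to\mathbb{R}$. It is incentive compatible (IC) if $q(x)\cdot x-s(x)\ge q(y)\cdot x-s(y)$ for all $x,y\in\mathbb{R}_+^k$, and individually rational (IR) if $q(x)\cdot x-s(x)\ge 0$ for all $x\in\mathbb{R}_+^k$. The revenue of $\mu$ from $X$ is $R(\mu;X):=\mathbb{E}[s(X)]$, and $\textsc{Rev}_\Gamma(X):=\sup_\mu R(\mu;X)$, the supremum over all IC and IR $\Gamma$-mechanisms. *)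

From HB Require Import structures.
From mathcomp Require Import all_boot all_order all_algebra.
From mathcomp Require Import all_classical all_reals all_analysis.
Set Implicit Arguments. Unset Strict Implicit. Unset Printing Implicit Defensive.
Import Order.TTheory GRing.Theory Num.Theory.
Import numFieldNormedType.Exports.
Local Open Scope classical_set_scope.
Local Open Scope ring_scope.

Definition nonneg_vec {R : realType} {k : nat} (x : 'rV[R]_k) : Prop :=
  forall i : 'I_k, 0 <= x ord0 i.

Definition dotv {R : realType} {k : nat} (a x : 'rV[R]_k) : R :=
  \sum_(i < k) a ord0 i * x ord0 i.

Definition is_Gamma_alloc {R : realType} {k : nat} (Gamma : set 'rV[R]_k)
  (q : 'rV[R]_k -> 'rV[R]_k) : Prop :=
  forall x, nonneg_vec x -> Gamma (q x).

Definition IC {R : realType} {k : nat}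
  (q : 'rV[R]_k -> 'rV[R]_k) (s : 'rV[R]_k -> R) : Prop :=
  forall x y, nonneg_vec x -> nonneg_vec y ->
    dotv (q y) x - s y <= dotv (q x) x - s x.

Definition IR {R : realType} {k : nat}
  (q : 'rV[R]_k -> 'rV[R]_k) (s : 'rV[R]_k -> R) : Prop :=
  forall x, nonneg_vec x -> 0 <= dotv (q x) x - s x.

Definition revenue {R : realType} {k : nat} {d : measure_display}
  {Omega : measurableType d} (P : probability Omega R)
  (X : Omega -> 'rV[R]_k) (s : 'rV[R]_k -> R) : \bar R :=
  (\int[P]_w (s (X w))%:E)%E.

(* IC and IR Gamma-mechanisms whose revenue E[s(X)] is well defined
   (s(X) measurable). *)
Definition admissible {R : realType} {k : nat} {d : measure_display}
  {Omega : measurableType d} (Gamma : set 'rV[R]_k)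
  (X : Omega -> 'rV[R]_k)
  (q : 'rV[R]_k -> 'rV[R]_k) (s : 'rV[R]_k -> R) : Prop :=
  [/\ is_Gamma_alloc Gamma q, IC q s, IR q s &
      measurable_fun [set: Omega] (fun w => s (X w))].

Definition Rev {R : realType} {k : nat} {d : measure_display}
  {Omega : measurableType d} (Gamma : set 'rV[R]_k)
  (P : probability Omega R) (X : Omega -> 'rV[R]_k) : \bar R :=
  ereal_sup [set revenue P X s | s in
              [set s | exists q, admissible Gamma X q s]].

(* Every IC and IR mechanism earns at most E[K |X|], where K bounds the
   allocations in Gamma, so Rev is finite; pick mechanisms (q_n, s_n),
   normalised by s_n(0) = 0, whose revenues tend to Rev.  Their utilities
   u_n(x) = q_n(x).x - s_n(x) are nonnegative, bounded by K |x| and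
   K-Lipschitz, so a diagonal extraction over a countable dense set makes them
   converge pointwise to some U along a subsequence.  Along it take
   s = limsup s_n: it is measurable and, by the reverse Fatou lemma with
   dominating function K |X|, it earns at least Rev.  At each x, a further
   subsequence realising the limsup and a cluster point q(x) of the allocations
   in the compact Gamma give q(x).x = s(x) + U(x) and
   U(y) >= U(x) + q(x).(y - x); this subgradient inequality is incentive
   compatibility, and U >= 0 is individual rationality. *)

From HB Require Import structures.
From mathcomp Require Import all_boot all_order all_algebra.
From mathcomp Require Import all_classical all_reals all_analysis.
From mathcomp Require Import lra measurable_realfun.
Import Order.TTheory GRing.Theory Num.Theory.
Import numFieldNormedType.Exports.
Set Implicit Arguments. Unset Strict Implicit. Unset Printing Implicit Defensive.
Local Open Scope classical_set_scope.
Local Open Scope ring_scope.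

Section dotv.
Variables (R : realType) (k : nat).
Implicit Types (a g v x y : 'rV[R]_k).

Lemma dotvBr a x y : dotv a (x - y) = dotv a x - dotv a y.
Proof. by rewrite /dotv -sumrB; apply: eq_bigr => i _; rewrite !mxE mulrBr. Qed.

Lemma dotvBl a g x : dotv (a - g) x = dotv a x - dotv g x.
Proof. by rewrite /dotv -sumrB; apply: eq_bigr => i _; rewrite !mxE mulrBl. Qed.

Lemma dotv0r a : dotv a 0 = 0.
Proof. by rewrite /dotv big1 // => i _; rewrite mxE mulr0. Qed.

Lemma dotvNr a x : dotv a (- x) = - dotv a x.
Proof. by rewrite -sub0r dotvBr dotv0r sub0r. Qed.

Lemma dotv_ge0 a x : nonneg_vec a -> nonneg_vec x -> 0 <= dotv a x.
Proof. by move=> a0 x0; apply: sumr_ge0 => i _; exact: mulr_ge0. Qed.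

Lemma nonneg_vec0 : nonneg_vec (0 : 'rV[R]_k).
Proof. by move=> i; rewrite mxE. Qed.

Lemma normr_coord_le x i : `|x ord0 i| <= `|x|.
Proof.
have /mapP[j _ ->] : `|x ord0 i| \in [seq `|x ij.1 ij.2| | ij : 'I_1 * 'I_k].
  by apply/mapP; exists (ord0, i) => //=; rewrite mem_enum.
by rewrite [leRHS]/Num.norm /= mx_normrE; apply/bigmax_geP; right; exists j.
Qed.

Lemma normr_row_le x e : 0 <= e -> (forall i, `|x ord0 i| <= e) -> `|x| <= e.
Proof.
move=> e0 xe; rewrite [leLHS]/Num.norm /= mx_normrE; apply/bigmax_leP.
by split=> // -[i j] _ /=; rewrite (ord1 i); exact: xe.
Qed.

Lemma normr_dotv_le a v B : (forall i, `|a ord0 i| <= B) ->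
  `|dotv a v| <= B * k%:R * `|v|.
Proof.
move=> aB; apply: le_trans (ler_norm_sum _ _ _) _.
have -> : B * k%:R * `|v| = \sum_(i < k) (B * `|v|).
  by rewrite sumr_const card_ord -[in RHS]mulr_natr mulrAC.
apply: ler_sum => i _; rewrite normrM; apply: ler_pM => //.
exact: normr_coord_le.
Qed.

Lemma dotv_continuous v : continuous (dotv ^~ v).
Proof.
move=> g A /= /(nbhs_ballP (dotv g v)) [e e0 eA].
have c0 : 0 < k%:R * `|v| + 1 by rewrite ltr_wpDl // mulr_ge0.
apply/nbhs_ballP; exists (e / (k%:R * `|v| + 1)); first by rewrite /= divr_gt0.
move=> h; rewrite -!ball_normE /= => gh; apply: eA; rewrite -ball_normE /= -dotvBl.
apply: le_lt_trans (normr_dotv_le v (fun i => normr_coord_le (g - h) i)) _.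
rewrite -mulrA; apply: le_lt_trans (ler_wpM2r _ (ltW gh)) _; first by rewrite mulr_ge0.
by rewrite mulrAC ltr_pdivrMr // ltr_pM2l // ltrDl.
Qed.

Lemma closed_dotv_le v r : closed [set g : 'rV[R]_k | dotv g v <= r].
Proof.
apply: (@preimage_closed _ R (dotv ^~ v) [set x | x <= r]).
  by move=> g _; exact: dotv_continuous.
exact: closed_le.
Qed.

End dotv.

Arguments nonneg_vec0 {R k}.

Section cluster_dotv.
Variables (R : realType) (k : nat) (c : nat -> 'rV[R]_k) (g : 'rV[R]_k).
Hypothesis cl : cluster (c @ \oo) g.

Lemma cluster_dotv_le v r :
  (\forall i \near \oo, dotv (c i) v <= r) -> dotv g v <= r.
Proof.
move: cl; rewrite clusterE => /(_ [set g | dotv g v <= r]) cl_le ev.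
by have := cl_le ev; rewrite -(closure_id _).1 //; exact: closed_dotv_le.
Qed.

Lemma cluster_dotv_le_lim v (a : nat -> R) l :
  (forall i, dotv (c i) v <= a i) -> a @ \oo --> l -> dotv g v <= l.
Proof.
move=> ca al; apply/ler_addgt0Pr => e e0; apply: cluster_dotv_le.
near=> i; apply: le_trans (ca i) (ltW _).
by near: i; apply: cvgr_lt al _ _; rewrite ltrDl.
Unshelve. all: by end_near.
Qed.

Lemma cluster_dotv_lim v (a : nat -> R) l :
  (forall i, dotv (c i) v = a i) -> a @ \oo --> l -> dotv g v = l.
Proof.
move=> ca al; apply/eqP; rewrite eq_le.
have ca_le i : dotv (c i) v <= a i by rewrite ca.
have ca' i : dotv (c i) (- v) <= - a i by rewrite dotvNr ca.
rewrite (cluster_dotv_le_lim ca_le al) /=.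
by rewrite -lerN2 -dotvNr; apply: cluster_dotv_le_lim ca' _; exact: cvgN.
Qed.

End cluster_dotv.

Lemma increasing_seq_ge (f : nat -> nat) : increasing_seq f -> forall n, (n <= f n)%N.
Proof.
move=> /increasing_seqP f_incr; elim=> [//|n IH].
by apply: leq_ltn_trans IH _; exact: f_incr.
Qed.

Lemma cvg_comp_ge (T : topologicalType) (b : nat -> T) (l : T) (tau : nat -> nat) :
  (\forall j \near \oo, (j <= tau j)%N) -> b @ \oo --> l -> b \o tau @ \oo --> l.
Proof.
move=> [M _ tauM] bl; apply: cvg_comp bl => A [N _ NA].
exists (maxn M N) => // j /=; rewrite geq_max => /andP[Mj Nj].
by apply: NA; apply: leq_trans Nj (tauM j Mj).
Qed.

Lemma bounded_cvg_subseq (R : realType) (a : R^nat) :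
  bounded_fun a -> exists2 g : nat -> nat, (forall n, n <= g n)%N & cvgn (a \o g).
Proof.
move=> a_bd; have [g g_incr ag] := bolzano_weierstrass a_bd.
by exists g => //; exact: increasing_seq_ge.
Qed.

Section diagonal_extraction.
Variables (R : realType) (a : nat -> R^nat) (sel : nat -> (nat -> nat) -> nat -> nat).
Hypothesis sel_ge : forall m f n, (n <= sel m f n)%N.
Hypothesis sel_cvg : forall m f, cvgn (a m \o f \o sel m f).

Fixpoint nested_subseq m : nat -> nat :=
  if m is m'.+1 then nested_subseq m' \o sel m (nested_subseq m') else sel 0 id.

Lemma nested_subseq_cvg m : cvgn (a m \o nested_subseq m).
Proof. by case: m => [|m]; [exact (@sel_cvg 0 id) | exact: sel_cvg]. Qed.

Lemma nested_subseq_factor m j : (m <= j)%N ->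
  exists2 rho : nat -> nat, (forall n, n <= rho n)%N &
    nested_subseq j = nested_subseq m \o rho.
Proof.
elim: j => [|j IH]; rewrite leq_eqVlt => /orP[/eqP-> | ]; try by exists id.
rewrite ltnS => /IH[rho rho_ge def_j] /=; rewrite def_j.
exists (rho \o sel j.+1 (nested_subseq m \o rho)) => //.
by move=> n /=; exact: leq_trans (@sel_ge _ _ n) (rho_ge _).
Qed.

Lemma nested_subseq_ge m n : (n <= nested_subseq m n)%N.
Proof.
have [rho rho_ge ->] := nested_subseq_factor (leq0n m).
exact: leq_trans (rho_ge n) (@sel_ge _ _ _).
Qed.

Lemma nested_diagonal_cvg m : cvgn (a m \o fun j => nested_subseq j j).
Proof.
have tau_ex j : exists tau,
    (m <= j)%N -> (j <= tau)%N /\ nested_subseq j j = nested_subseq m tau.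
  have [mj | //] := leqP m j; last by exists 0%N.
  by have [rho rho_ge ->] := nested_subseq_factor mj; exists (rho j).
have [tau tauP] := choice tau_ex.
have tau_ge : \forall j \near \oo, (j <= tau j)%N by exists m => // j /tauP[].
have tau_cvg := cvg_comp_ge tau_ge (@nested_subseq_cvg m).
apply/cvg_ex; eexists; apply: (cvg_trans _ tau_cvg); apply: near_eq_cvg.
by exists m => // j /= /tauP[_ ->].
Qed.

End diagonal_extraction.

Lemma diagonal_cvg_subseq (R : realType) (a : nat -> R^nat) :
  (forall m, bounded_fun (a m)) ->
  exists2 phi : nat -> nat, (forall j, j <= phi j)%N & forall m, cvgn (a m \o phi).
Proof.
move=> a_bd.
have sel_ex m f : exists2 g : nat -> nat, (forall n, n <= g n)%N & cvgn (a m \o f \o g).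
  apply: bounded_cvg_subseq; have [M [Mr aM]] := a_bd m.
  by exists M; split=> // x Mx n _; exact: aM.
pose sel m f := s2val (cid2 (sel_ex m f)).
have sel_ge m f n : (n <= sel m f n)%N by exact: (s2valP (cid2 (sel_ex m f))).
have sel_cvg m f : cvgn (a m \o f \o sel m f) by exact: (s2valP' (cid2 (sel_ex m f))).
exists (fun j => nested_subseq sel j j) => [j|m]; first exact: nested_subseq_ge.
exact: nested_diagonal_cvg.
Qed.

Lemma equilipschitz_cvgn (R : realType) (V : normedModType R) (A : set V)
    (f : nat -> V -> R) (K : R) (d : nat -> V) :
  (forall n x y, A x -> A y -> `|f n x - f n y| <= K * `|x - y|) ->
  (forall m, A (d m)) ->
  (forall x, A x -> forall e, 0 < e -> exists m, `|x - d m| <= e) ->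
  (forall m, cvgn (f ^~ (d m))) ->
  forall x, A x -> cvgn (f ^~ x).
Proof.
move=> f_lip Ad d_dense fd_cvg x Ax; apply/cauchy_cvgP/cauchy_exP => e e0.
have K1 : 0 < `|K| + 1 by rewrite ltr_wpDl.
have e2 : 0 < e / 2 by rewrite divr_gt0.
have [m xdm] := d_dense x Ax (e / 2 / (`|K| + 1)) (divr_gt0 e2 K1).
exists (limn (f ^~ (d m))).
suff : \forall n \near \oo, ball (limn (f ^~ (d m))) e (f n x) by [].
near=> n; rewrite /ball /=.
have close : `|f n (d m) - f n x| <= e / 2.
  apply: le_trans (f_lip _ _ _ (Ad m) Ax) _; rewrite distrC.
  apply: le_trans (_ : _ <= `|K| * `|x - d m|) _; first by rewrite ler_wpM2r // ler_norm.
  apply: le_trans (ler_wpM2l (normr_ge0 K) xdm) _; rewrite mulrCA ger_pMr //.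
  by rewrite ler_pdivrMr // mul1r lerDl.
have near_lim : `|limn (f ^~ (d m)) - f n (d m)| < e / 2.
  by near: n; exact: cvgr_dist_lt (fd_cvg m) _ e2.
rewrite -(subrK (f n (d m)) (limn _)) -addrA (splitr e).
apply: le_lt_trans (ler_normD _ _) _; exact: ltr_leD.
Unshelve. all: by end_near.
Qed.

Lemma nonneg_vec_dense_seq (R : realType) (k : nat) :
  exists2 d : nat -> 'rV[R]_k, forall m, nonneg_vec (d m) &
    forall x, nonneg_vec x -> forall e, 0 < e -> exists m, `|x - d m| <= e.
Proof.
pose d m : 'rV[R]_k := oapp (fun r : 'rV[rat]_k =>
  \row_i (ratr (Num.max (r ord0 i) 0) : R)) 0 (unpickle m).
exists d.
  move=> m i; rewrite /d; case: (unpickle m) => [r|] /=; rewrite mxE //.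
  by rewrite ler0q le_max lexx orbT.
move=> x x0 e e0.
have r_ex i : exists r : rat, ratr r \in `]x ord0 i, x ord0 i + e[.
  by apply: rat_in_itvoo; rewrite ltrDl.
have [r rP] := choice r_ex.
exists (pickle (\row_i r i : 'rV[rat]_k)); rewrite /d pickleK /=.
apply: normr_row_le (ltW e0) _ => i; rewrite !mxE.
have /andP[xr re] : x ord0 i < ratr (r i) < x ord0 i + e by have := rP i; rewrite in_itv.
have r0 : 0 < r i by rewrite -(ltr0q R); exact: le_lt_trans (x0 i) xr.
rewrite (max_idPl (ltW r0)) ler_norml; apply/andP; split; lra.
Qed.

Lemma limn_sup_subseq (R : realType) (b : R^nat) : bounded_fun b ->
  exists2 psi : nat -> nat, increasing_seq psi & b \o psi @ \oo --> limn_sup b.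
Proof.
move=> b_bd; apply/cluster_eventually_cvg/cluster_eventuallyP => e n e0.
have [b_ub b_lb] := (bounded_fun_has_ubound b_bd, bounded_fun_has_lbound b_bd).
have sups_cvg : sups b @ \oo --> limn_sup b by rewrite limn_supE //; exact: cvg_sups_inf.
have sups_ge m : limn_sup b <= sups b m.
  by rewrite limn_supE //; apply: ge_inf; [exact: bounded_fun_has_lbound_sups | exists m].
have [N _ sups_lt] : \forall m \near \oo, sups b m < limn_sup b + e.
  by apply: cvgr_lt sups_cvg _ _; rewrite ltrDl.
pose m := maxn n N.
have [_ [p /= mp <-] bp_gt] : exists2 y, sdrop b m y & limn_sup b - e < y.
  apply: sup_gt; first by exists (b m), m => /=.
  by apply: lt_le_trans (sups_ge m); rewrite ltrBlDr ltrDl.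
have bp_le : b p <= sups b m by apply: ub_le_sup; [exact: has_ubound_sdrop | exists p].
have sups_m := sups_lt m (leq_maxr n N).
exists p; first exact: leq_trans (leq_maxl n N) mp.
by rewrite ler_norml; apply/andP; split; rewrite /= in sups_m; lra.
Qed.

Lemma le_integral_limn_sup d (T : measurableType d) (R : realType)
    (mu : {measure set T -> \bar R}) (f : (T -> R)^nat) (h : T -> R) (c : \bar R) :
  (forall n, measurable_fun setT (f n)) -> (forall n x, `|f n x| <= h x) ->
  mu.-integrable setT (EFin \o h) ->
  (\forall n \near \oo, c <= \int[mu]_x (f n x)%:E)%E ->
  (c <= \int[mu]_x (limn_sup (f ^~ x))%:E)%E.
Proof.
move=> mf fh ih c_le.
have f_bd x : bounded_fun (f ^~ x).
  exists (h x); split; first exact: num_real.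
  by move=> M hM n _; exact: le_trans (fh n x) (ltW hM).
have sups_ge n x : f n x <= sups (f ^~ x) n.
  by apply: ub_le_sup; [exact/has_ubound_sdrop/bounded_fun_has_ubound/f_bd | exists n => /=].
have sups_le n x : sups (f ^~ x) n <= h x.
  apply: ge_sup; first by exists (f n x), n => /=.
  by move=> _ [m _ <-]; exact: le_trans (ler_norm _) (fh m x).
have sups_abs n x : (`|(sups (f ^~ x) n)%:E| <= (EFin \o h) x)%E.
  have := fh n x; rewrite ler_norml => /andP[fn_ge _].
  by rewrite /= lee_fin ler_norml sups_le andbT; exact: le_trans fn_ge (sups_ge n x).
have msups n : measurable_fun setT (fun x => (sups (f ^~ x) n)%:E).
  apply/measurable_EFinP/measurable_fun_sups => // x _.
  exact/bounded_fun_has_ubound.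
have sups_cvg x : (fun n => (sups (f ^~ x) n)%:E) @ \oo --> (limn_sup (f ^~ x))%:E.
  apply: cvg_EFin; first exact: nearW.
  rewrite limn_supE //; apply: cvg_sups_inf.
  - exact: bounded_fun_has_ubound (f_bd x).
  - exact: bounded_fun_has_lbound (f_bd x).
have mlimsup : measurable_fun setT (fun x => (limn_sup (f ^~ x))%:E).
  apply/measurable_EFinP/measurable_fun_limn_sup => // x _.
  - exact/bounded_fun_has_ubound.
  - exact/bounded_fun_has_lbound.
have [_ _ int_cvg] := dominated_convergence measurableT msups mlimsup
  (aeW _ (fun x _ => sups_cvg x)) ih (aeW _ (fun x n _ => sups_abs n x)).
rewrite -(cvg_lim _ int_cvg) //; apply: lime_ge; first exact: cvgP int_cvg.
apply: filterS c_le => n /le_trans; apply; apply: le_integral => //.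
- apply: le_integrable ih => //; first exact/measurable_EFinP.
  by move=> x _; apply: le_trans (lee_abs _); rewrite /= lee_fin.
- apply: le_integrable ih => // x _; exact: le_trans (sups_abs n x) (lee_abs _).
- by move=> x _; rewrite lee_fin.
Qed.

Definition utility (R : realType) (k : nat) (q : 'rV[R]_k -> 'rV[R]_k)
  (s : 'rV[R]_k -> R) (x : 'rV[R]_k) : R := dotv (q x) x - s x.

Section mechanism.
Variables (R : realType) (k : nat) (Gamma : set 'rV[R]_k) (K : R).
Hypothesis Gamma_bound : forall g x, Gamma g -> `|dotv g x| <= K * `|x|.
Variables (q : 'rV[R]_k -> 'rV[R]_k) (s : 'rV[R]_k -> R).
Hypotheses (q_alloc : is_Gamma_alloc Gamma q) (qs_IC : IC q s) (qs_IR : IR q s).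
Implicit Types x y : 'rV[R]_k.

Lemma utility_subgradient x y : nonneg_vec x -> nonneg_vec y ->
  utility q s y + dotv (q y) (x - y) <= utility q s x.
Proof.
move=> x0 y0; have := qs_IC x0 y0; rewrite /utility dotvBr.
by rewrite addrAC addrCA subrr addr0 addrC.
Qed.

Lemma payment_ge_at0 x : nonneg_vec x -> s 0 <= s x.
Proof.
move=> x0; have := qs_IC nonneg_vec0 x0.
by rewrite !dotv0r !sub0r lerN2.
Qed.

Lemma payment_at0_le0 : s 0 <= 0.
Proof. by have := qs_IR nonneg_vec0; rewrite dotv0r sub0r oppr_ge0. Qed.

Lemma payment_le x : nonneg_vec x -> s x <= K * `|x|.
Proof.
move=> x0; have := qs_IR x0; rewrite subr_ge0 => /le_trans; apply.
exact: le_trans (ler_norm _) (Gamma_bound _ (q_alloc x0)).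
Qed.

Lemma normr_payment_le x : nonneg_vec x -> `|s x| <= `|s 0| + `|K| * `|x|.
Proof.
move=> x0; have := payment_ge_at0 x0; have := payment_le x0.
have : K * `|x| <= `|K| * `|x| by rewrite ler_wpM2r // ler_norm.
have : - s 0 <= `|s 0| by rewrite -normrN ler_norm.
have : 0 <= `|K| * `|x| by exact: mulr_ge0.
have := normr_ge0 (s 0).
by move=> *; rewrite ler_norml; apply/andP; split; lra.
Qed.

Lemma utility_lipschitz x y : nonneg_vec x -> nonneg_vec y ->
  `|utility q s x - utility q s y| <= K * `|x - y|.
Proof.
move=> x0 y0; have uxy := utility_subgradient x0 y0; have uyx := utility_subgradient y0 x0.
have := Gamma_bound (y - x) (q_alloc x0); have := Gamma_bound (x - y) (q_alloc y0).
rewrite [`|y - x|]distrC !ler_norml => /andP[? ?] /andP[? ?].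
by apply/andP; split; lra.
Qed.

Lemma utility_le x : nonneg_vec x -> utility q s x <= K * `|x| - s 0.
Proof.
move=> x0; have := utility_lipschitz x0 nonneg_vec0.
rewrite /utility dotv0r sub0r subr0 ler_norml => /andP[_]; lra.
Qed.

End mechanism.

Lemma compact_dotv_bound (R : realType) (k : nat) (Gamma : set 'rV[R]_k) :
  compact Gamma -> exists K, forall g x, Gamma g -> `|dotv g x| <= K * `|x|.
Proof.
move=> /compact_bounded[M [_ M_bd]].
have G_coord g i : Gamma g -> `|g ord0 i| <= M + 1.
  by move=> Gg; apply: le_trans (normr_coord_le g i) (M_bd _ _ _ Gg); rewrite ltrDl.
by exists ((M + 1) * k%:R) => g x Gg; exact: normr_dotv_le (G_coord g ^~ Gg).
Qed.

Section revenue.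
Variables (R : realType) (k : nat) (Gamma : set 'rV[R]_k) (K : R).
Hypothesis Gamma_ge0 : forall g, Gamma g -> nonneg_vec g.
Hypothesis Gamma_bound : forall g x, Gamma g -> `|dotv g x| <= K * `|x|.
Variables (d : measure_display) (Omega : measurableType d) (P : probability Omega R).
Variable X : Omega -> 'rV[R]_k.
Hypothesis X_ge0 : forall w, nonneg_vec (X w).
Hypothesis X_int : P.-integrable setT (fun w => (`|X w|)%:E).

Lemma admissible_normalize q s : admissible Gamma X q s ->
  admissible Gamma X q (fun x => s x - s 0).
Proof.
case=> q_alloc qs_IC qs_IR s_meas; split=> //.
- by move=> x y x0 y0 /=; have := qs_IC x y x0 y0; lra.
- move=> x x0 /=; have := qs_IC x 0 x0 nonneg_vec0.
  by have := dotv_ge0 (Gamma_ge0 (q_alloc _ nonneg_vec0)) x0; lra.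
- exact: measurable_funB s_meas (measurable_cst _).
Qed.

Lemma bound_integrable : P.-integrable setT (fun w => (K * `|X w|)%:E).
Proof. by under eq_fun do rewrite EFinM; exact: integrableZl. Qed.

Lemma payment_integrable q s : admissible Gamma X q s ->
  P.-integrable setT (fun w => (s (X w))%:E).
Proof.
case=> q_alloc qs_IC qs_IR s_meas.
have cst_int : P.-integrable setT (fun=> `|s 0|%:E) by exact: finite_measure_integrable_cst.
have X_int' := integrableZl measurableT `|K| X_int.
apply: le_integrable (integrableD measurableT cst_int X_int') => //.
  exact/measurable_EFinP.
move=> w _; rewrite /= lee_fin; apply: le_trans (ler_norm _).
exact: (normr_payment_le Gamma_bound q_alloc qs_IC qs_IR (X_ge0 w)).
Qed.

Lemma revenue_normalize q s : admissible Gamma X q s ->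
  (revenue P X s <= revenue P X (fun x => (s x - s 0)%R))%E.
Proof.
move=> qs_adm; apply: le_integral => //.
- exact: payment_integrable qs_adm.
- exact: payment_integrable (admissible_normalize qs_adm).
- by case: qs_adm => _ _ qs_IR _ w _; rewrite lee_fin lerDl oppr_ge0 (payment_at0_le0 qs_IR).
Qed.

Lemma revenue_le_bound q s : admissible Gamma X q s ->
  (revenue P X s <= \int[P]_w (K * `|X w|)%R%:E)%E.
Proof.
move=> qs_adm; apply: le_integral => //.
- exact: payment_integrable qs_adm.
- exact: bound_integrable.
- case: qs_adm => q_alloc _ qs_IR _ w _.
  by rewrite lee_fin (payment_le Gamma_bound q_alloc qs_IR).
Qed.

Lemma Rev_fin_num : Gamma !=set0 -> Rev Gamma P X \is a fin_num.
Proof.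
move=> [g0 Gg0].
have zero_adm : admissible Gamma X (fun=> g0) (fun=> 0).
  split=> //; first by move=> x x0; rewrite subr0; exact: dotv_ge0 (Gamma_ge0 Gg0) x0.

have Rev_ge0 : (0 <= Rev Gamma P X)%E.
  by apply: ereal_sup_ubound; exists (fun=> 0); [exists (fun=> g0) | exact: integral0].
rewrite ge0_fin_numE //; apply: le_lt_trans (_ : _ <= \int[P]_w (K * `|X w|)%:E)%E _.
  by apply: ge_ereal_sup => _ [s [q qs_adm] <-]; exact: revenue_le_bound qs_adm.
by rewrite ltey_eq integrable_fin_num //; exact: bound_integrable.
Qed.

Lemma admissible_approx_seq : Gamma !=set0 ->
  exists (qn : nat -> 'rV[R]_k -> 'rV[R]_k) (sn : nat -> 'rV[R]_k -> R),
    forall n, [/\ admissible Gamma X (qn n) (sn n), sn n 0 = 0 &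
      (Rev Gamma P X - n.+1%:R^-1%:E <= revenue P X (sn n))%E].
Proof.
move=> /Rev_fin_num Rev_fin.
have mech_ex n : exists qs : ('rV[R]_k -> 'rV[R]_k) * ('rV[R]_k -> R),
    [/\ admissible Gamma X qs.1 qs.2, qs.2 0 = 0 &
      (Rev Gamma P X - n.+1%:R^-1%:E <= revenue P X qs.2)%E].
  have : (Rev Gamma P X - n.+1%:R^-1%:E < Rev Gamma P X)%E.
    by rewrite lteBlDr // lteDl // lte_fin invr_gt0.
  move=> /ereal_sup_gt[_ [s [q qs_adm] <-] Rev_lt].
  exists (q, fun x => s x - s 0); split => //=; first exact: admissible_normalize.
    by rewrite subrr.
  exact: le_trans (ltW Rev_lt) (revenue_normalize qs_adm).
have [qs qsP] := choice mech_ex.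
by exists (fun n => (qs n).1), (fun n => (qs n).2).
Qed.

End revenue.

Section mechanism_sequence.
Variables (R : realType) (k : nat) (Gamma : set 'rV[R]_k) (K : R).
Hypothesis Gamma_bound : forall g x, Gamma g -> `|dotv g x| <= K * `|x|.
Variables (qn : nat -> 'rV[R]_k -> 'rV[R]_k) (sn : nat -> 'rV[R]_k -> R).
Hypothesis qn_alloc : forall n, is_Gamma_alloc Gamma (qn n).
Hypothesis qsn_IC : forall n, IC (qn n) (sn n).
Hypothesis qsn_IR : forall n, IR (qn n) (sn n).
Hypothesis sn0 : forall n, sn n 0 = 0.

Let un n := utility (qn n) (sn n).

Lemma payment_seq_bound n x : nonneg_vec x -> `|sn n x| <= K * `|x|.
Proof.
move=> x0; have := payment_ge_at0 (qsn_IC n) x0; rewrite sn0 => sn_ge0.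
by rewrite ger0_norm //; exact: (payment_le Gamma_bound (qn_alloc n) (qsn_IR n) x0).
Qed.

Lemma utility_seq_bound n x : nonneg_vec x -> `|un n x| <= K * `|x|.
Proof.
move=> x0; rewrite ger0_norm; last exact: qsn_IR.
by have := utility_le Gamma_bound (qn_alloc n) (qsn_IC n) x0; rewrite sn0 subr0.
Qed.

Lemma utility_cvg_subseq : exists2 phi : nat -> nat, (forall j, j <= phi j)%N &
  forall x, nonneg_vec x -> cvgn (fun j => un (phi j) x).
Proof.
have [dd dd_ge0 dd_dense] := nonneg_vec_dense_seq R k.
have un_bd m : bounded_fun (fun n => un n (dd m)).
  exists (K * `|dd m|); split; first exact: num_real.
  by move=> M KM n _; apply: le_trans (ltW KM); exact: utility_seq_bound.
have [phi phi_ge phi_cvg] := diagonal_cvg_subseq un_bd.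
exists phi => //; apply: (equilipschitz_cvgn (K := K) _ dd_ge0 dd_dense) => //.
by move=> j x y x0 y0; exact: (utility_lipschitz Gamma_bound (qn_alloc _) (qsn_IC _) x0 y0).
Qed.

Variable phi : nat -> nat.
Hypothesis phi_ge : forall j, (j <= phi j)%N.

(* Only the utilities converge along [phi]; the limsup of the payments is what
   the reverse Fatou lemma needs to keep the revenue from dropping. *)
Definition limit_payment x := limn_sup (fun j => sn (phi j) x).

Lemma payment_subseq_bounded x : nonneg_vec x -> bounded_fun (fun j => sn (phi j) x).
Proof.
move=> x0; exists (K * `|x|); split; first exact: num_real.
by move=> M KM j _; apply: le_trans (ltW KM); exact: payment_seq_bound.
Qed.

Section limit_revenue.
Variables (d : measure_display) (Omega : measurableType d) (P : probability Omega R).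
Variable X : Omega -> 'rV[R]_k.
Hypothesis X_ge0 : forall w, nonneg_vec (X w).
Hypothesis X_int : P.-integrable setT (fun w => (`|X w|)%:E).
Hypothesis sn_meas : forall n, measurable_fun setT (fun w => sn n (X w)).

Lemma limit_payment_measurable : measurable_fun setT (fun w => limit_payment (X w)).
Proof.
apply: (measurable_fun_limn_sup (h := fun j w => sn (phi j) (X w))) => // w _.
- exact/bounded_fun_has_ubound/payment_subseq_bounded.
- exact/bounded_fun_has_lbound/payment_subseq_bounded.
Qed.

Lemma limit_payment_revenue_ge c :
  (forall n, c - n.+1%:R^-1%:E <= revenue P X (sn n))%E -> (c <= revenue P X limit_payment)%E.
Proof.
move=> c_le; apply/lee_subgt0Pr => e e0.
apply: (le_integral_limn_sup (h := fun w => K * `|X w|)) => //.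
- by move=> j w; exact: payment_seq_bound.
- exact: bound_integrable.
near=> j; apply: le_trans (c_le (phi j)); rewrite leeB // lee_fin.
apply: (@le_trans _ _ j.+1%:R^-1); first by rewrite lef_pV2 ?posrE // ler_nat ltnS.
by apply/ltW; near: j; exact: near_infty_natSinv_lt (PosNum e0).
Unshelve. all: by end_near.
Qed.

End limit_revenue.

Hypothesis Gamma_compact : compact Gamma.
Hypothesis un_cvg : forall x, nonneg_vec x -> cvgn (fun j => un (phi j) x).

Let U x := limn (fun j => un (phi j) x).

Lemma limit_allocation_ex x : nonneg_vec x -> exists2 g, Gamma g &
  dotv g x = limit_payment x + U x /\
  forall y, nonneg_vec y -> U x + dotv g (y - x) <= U y.
Proof.
move=> x0; have [psi psi_incr sn_psi] := limn_sup_subseq (payment_subseq_bounded x0).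
pose c i := qn (phi (psi i)) x.
have [g [Gg g_cl]] : Gamma `&` cluster (c @ \oo) !=set0.
  by apply: Gamma_compact; exists 0%N => // i _; exact: qn_alloc.
have psi_ge : \forall i \near \oo, (i <= psi i)%N by exact: nearW (increasing_seq_ge psi_incr).
have un_psi y : nonneg_vec y -> (fun i => un (phi (psi i)) y) @ \oo --> U y.
  by move=> y0; exact: cvg_comp_ge psi_ge (un_cvg y0).
exists g => //; split.
  apply: (cluster_dotv_lim g_cl _ (cvgD sn_psi (un_psi x x0))) => i.
  by rewrite /un /utility /= addrC subrK.
move=> y y0; suff : dotv g (y - x) <= U y - U x by lra.
apply: (cluster_dotv_le_lim g_cl _ (cvgB (un_psi y y0) (un_psi x x0))) => i.
by have := utility_subgradient (qsn_IC (phi (psi i))) y0 x0; rewrite /c /un !fctE /=; lra.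
Qed.

Lemma limit_mechanism : exists q,
  [/\ is_Gamma_alloc Gamma q, IC q limit_payment & IR q limit_payment].
Proof.
have q_ex x : exists g, nonneg_vec x -> [/\ Gamma g, dotv g x = limit_payment x + U x &
    forall y, nonneg_vec y -> U x + dotv g (y - x) <= U y].
  have [x0|] := pselect (nonneg_vec x); last by exists 0.
  by have [g Gg [gx g_sub]] := limit_allocation_ex x0; exists g.
have [q qP] := choice q_ex.
have U_ge0 x : nonneg_vec x -> 0 <= U x.
  by move=> x0; apply: limr_ge (un_cvg x0) _; apply: nearW => j; exact: qsn_IR.
exists q; split=> [x x0 | x y x0 y0 | x x0]; first by have [] := qP x x0.
- have [_ qx _] := qP x x0; have [_ qy q_sub] := qP y y0.
  by have := q_sub x x0; rewrite dotvBr; lra.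
- by have [_ qx _] := qP x x0; rewrite qx addrC addKr; exact: U_ge0.
Qed.

End mechanism_sequence.

Section approximation_limit.
Variables (R : realType) (k : nat) (Gamma : set 'rV[R]_k) (K : R).
Hypothesis Gamma_compact : compact Gamma.
Hypothesis Gamma_bound : forall g x, Gamma g -> `|dotv g x| <= K * `|x|.
Variables (d : measure_display) (Omega : measurableType d) (P : probability Omega R).
Variable X : Omega -> 'rV[R]_k.
Hypothesis X_ge0 : forall w, nonneg_vec (X w).
Hypothesis X_int : P.-integrable setT (fun w => (`|X w|)%:E).

Lemma approx_seq_limit (qn : nat -> 'rV[R]_k -> 'rV[R]_k) (sn : nat -> 'rV[R]_k -> R) c :
  (forall n, [/\ admissible Gamma X (qn n) (sn n), sn n 0 = 0 &
    (c - n.+1%:R^-1%:E <= revenue P X (sn n))%E]) ->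
  exists q s, admissible Gamma X q s /\ (c <= revenue P X s)%E.
Proof.
move=> qsn.
have qn_alloc n : is_Gamma_alloc Gamma (qn n) by have [[]] := qsn n.
have qsn_IC n : IC (qn n) (sn n) by have [[]] := qsn n.
have qsn_IR n : IR (qn n) (sn n) by have [[]] := qsn n.
have sn_meas n : measurable_fun setT (fun w => sn n (X w)) by have [[]] := qsn n.
have sn0 n : sn n 0 = 0 by have [] := qsn n.
have c_le n : (c - n.+1%:R^-1%:E <= revenue P X (sn n))%E by have [] := qsn n.
have [phi phi_ge phi_cvg] := utility_cvg_subseq Gamma_bound qn_alloc qsn_IC qsn_IR sn0.
have [q [q_alloc qS_IC qS_IR]] :=
  limit_mechanism Gamma_bound qn_alloc qsn_IC qsn_IR sn0 Gamma_compact phi_cvg.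
exists q, (limit_payment sn phi); split; first split=> //.
  exact: (limit_payment_measurable Gamma_bound qn_alloc qsn_IC qsn_IR sn0 phi X_ge0 sn_meas).
exact: (limit_payment_revenue_ge Gamma_bound qn_alloc qsn_IC qsn_IR sn0
  phi_ge X_ge0 X_int sn_meas c_le).
Qed.

End approximation_limit.

Theorem theorem1 (R : realType) (k : nat) (hk : (0 < k)%N)
  (Gamma : set 'rV[R]_k)
  (hGne : Gamma !=set0) (hGc : compact Gamma)
  (hGpos : forall g, Gamma g -> nonneg_vec g)
  (d : measure_display) (Omega : measurableType d)
  (P : probability Omega R) (X : Omega -> 'rV[R]_k)
  (hXmeas : forall i : 'I_k, measurable_fun [set: Omega] (fun w => X w ord0 i))
  (hXpos : forall w, nonneg_vec (X w))
  (hXint : P.-integrable [set: Omega] (fun w => (`|X w|)%:E)) :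
  exists (q : 'rV[R]_k -> 'rV[R]_k) (s : 'rV[R]_k -> R),
    admissible Gamma X q s /\ revenue P X s = Rev Gamma P X.
Proof.
have [K Gamma_bound] := compact_dotv_bound hGc.
have [qn [sn qsn]] := admissible_approx_seq hGpos Gamma_bound hXpos hXint hGne.
have [q [s [qs_adm Rev_le]]] := approx_seq_limit hGc Gamma_bound hXpos hXint qsn.
exists q, s; split=> //; apply/eqP; rewrite eq_le Rev_le andbT.
by apply: ereal_sup_ubound; exists s => //; exists q.
Qed.
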